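(* Let $\nu\in\mathbb{R}$, $n\ge 1$, and let $p_n(\underline{\theta})$ be any function of $\underline{\theta}=(\theta_1,\dots,\theta_n)$ that does not depend on $\underline{l}=(l_1,\dots,l_n)\in\{0,1\}^n$. Then $$K_n(\underline{\theta})=\sum_{l_1=0}^1\cdots\sum_{l_n=0}^1(-1)^{l_1+\dots+l_n}\prod_{1\le i<j\le n}\Big(1+(l_i-l_j)\frac{i\sin\pi\nu}{\sinh\theta_{ij}}\Big)p_n(\underline{\theta})$$ vanishes identically.
   Context: $\theta_{ij}=\theta_i-\theta_j$. *)

From Stdlib Require Import Reals.
From mathcomp Require Import all_boot all_order all_algebra.
From mathcomp Require Import Rstruct.
From mathcomp.real_closed Require Import complex.
Import GRing.Theory Num.Theory.

Definition theta_ij (n : nat) (theta : 'I_n -> R) (i j : 'I_n) : R :=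
  Rminus (theta i) (theta j).
Arguments theta_ij {n} theta i j.

From Stdlib Require Import Reals.
From mathcomp Require Import all_boot all_order all_algebra.
From mathcomp Require Import Rstruct.
From mathcomp.real_closed Require Import complex.
From mathcomp Require Import zify ring.
Import Order.TTheory GRing.Theory Num.Theory.

Set Implicit Arguments.
Unset Strict Implicit.
Unset Printing Implicit Defensive.
Local Open Scope ring_scope.

(* Write x_k = exp θ_k and a = i sin πν.  Then i sin πν / sinh θ_ij is
   c_ij = 2a x_i x_j / (x_i² - x_j²), and as c_ji = -c_ij, encoding l by
   S = {k | l_k = 1} turns the sum into K_A = Σ_{S ⊆ A} (-1)^|S| W_A(S) with
   W_A(S) = Π_{i ∈ S, j ∈ A \ S} (1 + c_ij).  For a set B consider the
   polynomial in y
     N_B(y) = Σ_{S ⊆ B} (-1)^|S| W_B(S)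
              (Π_{k ∈ B} (x_k² - y² + [k ∈ S] 2a x_k y)
             - Π_{k ∈ B} (x_k² - y² - [k ∉ S] 2a x_k y)).
   Both products have leading term (-y²)^|B|, so deg N_B < 2|B|.  For m ∉ B,
   N_B(x_m) = Π_{k ∈ B} (x_k² - x_m²) K_{B ∪ {m}}, and for j ∈ B, N_B vanishes
   at x_j, while N_B(-x_j) is a multiple of K_{B \ {j}}.  By induction on |A|
   the 2|B| points ±x_j are roots, hence N_B = 0 and K_A = 0 whenever A ≠ ∅. *)

Lemma sum_subset_setD1 (V : nmodType) (T : finType) (A : {set T}) (m : T)
    (f : {set T} -> V) :
  m \in A ->
  \sum_(S : {set T} | S \subset A) f S =
  \sum_(S : {set T} | S \subset A :\ m) (f S + f (m |: S)).
Proof.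
move=> mA; rewrite big_split /= (bigID (fun S : {set T} => m \in S)) /= addrC.
congr (_ + _); first by apply: eq_bigl => S; rewrite subsetD1.
rewrite (reindex_onto (fun S => m |: S) (fun S => S :\ m)) /=; last first.
  by move=> S /andP[_ mS]; rewrite setD1K.
apply: eq_bigl => S; rewrite setU11 andbT subUset sub1set mA subsetD1.
case mS: (m \in S) => /=; last by rewrite setU1K ?mS ?eqxx.
rewrite andbF; apply/negP => /andP[_ /eqP E].
by have := setD11 m (m |: S); rewrite E mS.
Qed.

Lemma size_sub_eq_lead (R : nzRingType) (p q : {poly R}) :
  size p = size q -> lead_coef p = lead_coef q ->
  (size (p - q)%R <= (size p).-1)%N.
Proof.
move=> Esize Elead; apply/leq_sizeP => k; rewrite leq_eqVlt => /orP[/eqP <-|ltk].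
  by move: Elead; rewrite coefB /lead_coef Esize => ->; rewrite subrr.
have [lepk leqk] : (size p <= k)%N /\ (size q <= k)%N by rewrite -Esize; lia.
by rewrite coefB !nth_default // subrr.
Qed.

Lemma prod_ord_pairs (R : comPzRingType) (n : nat) (h : 'I_n -> 'I_n -> R) :
  (forall i, h i i = 1) ->
  \prod_(i < n) \prod_(j < n) h i j =
  \prod_(i < n) \prod_(j < n | (i < j)%N) (h i j * h j i).
Proof.
move=> h_diag.
have split_row i : \prod_(j < n) h i j =
    \prod_(j < n | (i < j)%N) h i j * \prod_(j < n | (j < i)%N) h i j.
  rewrite (bigID (fun j : 'I_n => (i < j)%N)) /=; congr (_ * _).
  rewrite big_mkcond [RHS]big_mkcond; apply: eq_bigr => j _.
  by case: ltngtP => // /val_inj ->; rewrite h_diag.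
rewrite (eq_bigr _ (fun i _ => split_row i)) big_split /=.
rewrite [X in _ * X](exchange_big_dep xpredT) //= -big_split.
by under eq_bigr do rewrite -big_split.
Qed.

Lemma size_scaleX_addC (R : nzRingType) (c u : R) : (size (c *: 'X + u%:P)%R <= 2)%N.
Proof.
rewrite (leq_trans (size_polyD _ _)) // geq_max.
by rewrite (leq_trans (size_scale_leq _ _)) ?size_polyX // (leq_trans (size_polyC_leq1 _)).
Qed.

Lemma size_quadratic (R : nzRingType) (c u : R) : size (- 'X^2 + (c *: 'X + u%:P)) = 3%N.
Proof. by rewrite size_polyDl size_polyN size_polyXn // ltnS size_scaleX_addC. Qed.

Lemma lead_coef_quadratic (R : nzRingType) (c u : R) :
  lead_coef (- 'X^2 + (c *: 'X + u%:P)) = -1.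
Proof.
rewrite lead_coefDl ?lead_coefN ?lead_coefXn //.
by rewrite size_polyN size_polyXn ltnS size_scaleX_addC.
Qed.

Section AlternatingSum.

Variables (F : fieldType) (T : finType) (a : F) (x : T -> F).

Definition coupling (i j : T) : F := a *+ 2 * x i * x j / (x i ^+ 2 - x j ^+ 2).

Lemma coupling_antisym i j : coupling j i = - coupling i j.
Proof. by rewrite /coupling -opprB invrN mulrN; congr (- _); ring. Qed.

Definition weight (A S : {set T}) : F :=
  \prod_(i in A) \prod_(j in A)
     (if (i \in S) && (j \notin S) then 1 + coupling i j else 1).

Definition alt_sum (A : {set T}) : F :=
  \sum_(S : {set T} | S \subset A) (-1) ^+ #|S| * weight A S.

Lemma weight_setD1 (A S : {set T}) (m : T) :
  m \in A -> S \subset A :\ m ->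
  weight A S = weight (A :\ m) S *
     \prod_(k in A :\ m) (if k \in S then 1 + coupling k m else 1).
Proof.
move=> mA; rewrite subsetD1 => /andP[_ mS].
rewrite /weight (big_setD1 m mA) /= big1 ?mul1r => [|j _]; last by rewrite (negbTE mS).
rewrite -big_split; apply: eq_bigr => i _.
by rewrite (big_setD1 m mA) /= mulrC mS andbT.
Qed.

Lemma weight_setU1 (A S : {set T}) (m : T) :
  m \in A -> S \subset A :\ m ->
  weight A (m |: S) = weight (A :\ m) S *
     \prod_(k in A :\ m) (if k \in S then 1 else 1 + coupling m k).
Proof.
move=> mA; rewrite subsetD1 => /andP[_ mS].
rewrite /weight (big_setD1 m mA) /= mulrC; congr (_ * _).
  apply: eq_bigr => i; rewrite in_setD1 => /andP[im _].
  rewrite (big_setD1 m mA) /= setU11 andbF mul1r; apply: eq_bigr => j.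
  by rewrite in_setD1 => /andP[jm _]; rewrite !in_setU1 (negbTE im) (negbTE jm).
rewrite (big_setD1 m mA) /= setU11 andbF mul1r; apply: eq_bigr => k.
by rewrite in_setD1 in_setU1 => /andP[/negbTE -> _] /=; case: (k \in S).
Qed.

Definition quad_prod (B : {set T}) (g : T -> F) : {poly F} :=
  \prod_(k in B) (- 'X^2 + (g k *: 'X + (x k ^+ 2)%:P)).

Lemma size_quad_prod B g : size (quad_prod B g) = (2 * #|B|).+1.
Proof.
rewrite size_prod => [|k _]; last by rewrite -size_poly_gt0 size_quadratic.
rewrite (eq_bigr _ (fun k _ => size_quadratic _ _)) sum_nat_const (@eq_card _ _ B) //.
lia.
Qed.

Lemma lead_coef_quad_prod B g : lead_coef (quad_prod B g) = (-1) ^+ #|B|.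
Proof.
by rewrite lead_coef_prod -prodr_const; apply: eq_bigr => k _; rewrite lead_coef_quadratic.
Qed.

Lemma horner_quad_prod B g y :
  (quad_prod B g).[y] = \prod_(k in B) (x k ^+ 2 - y ^+ 2 + g k * y).
Proof.
rewrite horner_prod; apply: eq_bigr => k _.
rewrite hornerD hornerN hornerXn hornerD hornerZ hornerX hornerC; ring.
Qed.

Definition alt_poly (B : {set T}) : {poly F} :=
  \sum_(S : {set T} | S \subset B) ((-1) ^+ #|S| * weight B S) *:
     (quad_prod B (fun k => if k \in S then a *+ 2 * x k else 0) -
      quad_prod B (fun k => if k \in S then 0 else - (a *+ 2 * x k))).

Lemma size_alt_poly B : (size (alt_poly B) <= 2 * #|B|)%N.
Proof.
apply: (big_ind (fun p : {poly F} => size p <= 2 * #|B|)%N) => [|p q hp hq|S _].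
- by rewrite size_poly0.
- by rewrite (leq_trans (size_polyD _ _)) // geq_max hp hq.
rewrite (leq_trans (size_scale_leq _ _)) // (leq_trans (size_sub_eq_lead _ _)) //.
all: by rewrite ?size_quad_prod ?lead_coef_quad_prod.
Qed.

Hypothesis sqx_neq : forall i j, i != j -> x i ^+ 2 != x j ^+ 2.

Lemma coupling_factor k m : k != m ->
  (1 + coupling k m) * (x k ^+ 2 - x m ^+ 2) = x k ^+ 2 - x m ^+ 2 + a *+ 2 * x k * x m.
Proof.
by move=> km; have := sqx_neq km; rewrite -subr_eq0 => nz; rewrite /coupling; field.
Qed.

Lemma coupling_factorN k m : k != m ->
  (1 + coupling m k) * (x k ^+ 2 - x m ^+ 2) = x k ^+ 2 - x m ^+ 2 - a *+ 2 * x k * x m.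
Proof.
move=> km; have := sqx_neq km; rewrite eq_sym -subr_eq0 => nz.
by rewrite /coupling; field.
Qed.

Lemma horner_alt_poly_x (A : {set T}) m : m \in A ->
  (alt_poly (A :\ m)).[x m] = \prod_(k in A :\ m) (x k ^+ 2 - x m ^+ 2) * alt_sum A.
Proof.
move=> mA; rewrite /alt_sum (sum_subset_setD1 _ mA) /alt_poly horner_sum big_distrr.
apply: eq_bigr => S SsubB; have mS : m \notin S by move: SsubB; rewrite subsetD1 => /andP[].
rewrite hornerZ hornerD hornerN !horner_quad_prod.
rewrite (weight_setD1 mA SsubB) (weight_setU1 mA SsubB).
have in_factor k : k \in A :\ m ->
    x k ^+ 2 - x m ^+ 2 + (if k \in S then a *+ 2 * x k else 0) * x m =
    (if k \in S then 1 + coupling k m else 1) * (x k ^+ 2 - x m ^+ 2).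
  by case/setD1P => km _; case: (k \in S); rewrite ?coupling_factor //; ring.
have out_factor k : k \in A :\ m ->
    x k ^+ 2 - x m ^+ 2 + (if k \in S then 0 else - (a *+ 2 * x k)) * x m =
    (if k \in S then 1 else 1 + coupling m k) * (x k ^+ 2 - x m ^+ 2).
  by case/setD1P => km _; case: (k \in S); rewrite ?coupling_factorN //; ring.
rewrite (eq_bigr _ in_factor) (eq_bigr _ out_factor) !big_split /=.
rewrite cardsU1 mS add1n [(-1) ^+ _.+1]exprS; ring.
Qed.

Lemma horner_alt_poly_sq (B : {set T}) j y : j \in B -> y ^+ 2 = x j ^+ 2 ->
  (alt_poly B).[y] = a *+ 2 * x j * y *
    \sum_(S : {set T} | S \subset B :\ j) (-1) ^+ #|S| * weight (B :\ j) S *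
      (\prod_(k in B :\ j)
          (x k ^+ 2 - x j ^+ 2 + a *+ 2 * x k * (if k \in S then x j else - y)) -
       \prod_(k in B :\ j)
          (x k ^+ 2 - x j ^+ 2 + a *+ 2 * x k * (if k \in S then y else - x j))).
Proof.
move=> jB hy; rewrite /alt_poly horner_sum (sum_subset_setD1 _ jB) big_distrr.
apply: eq_bigr => S SsubB; have jS : j \notin S by move: SsubB; rewrite subsetD1 => /andP[].
rewrite !hornerZ !hornerD !hornerN !horner_quad_prod !(big_setD1 j jB) /= hy.
rewrite setU11 (negbTE jS).
rewrite (weight_setD1 jB SsubB) (weight_setU1 jB SsubB).
have out_factor k : k \in B :\ j ->
    (if k \in S then 1 + coupling k j else 1) *
      (x k ^+ 2 - x j ^+ 2 + (if k \in S then 0 else - (a *+ 2 * x k)) * y) =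
    x k ^+ 2 - x j ^+ 2 + a *+ 2 * x k * (if k \in S then x j else - y).
  by case/setD1P => kj _; case: (k \in S); rewrite ?mul0r ?addr0 ?coupling_factor //; ring.
have in_factor k : k \in B :\ j ->
    (if k \in S then 1 else 1 + coupling j k) *
      (x k ^+ 2 - x j ^+ 2 + (if k \in j |: S then a *+ 2 * x k else 0) * y) =
    x k ^+ 2 - x j ^+ 2 + a *+ 2 * x k * (if k \in S then y else - x j).
  case/setD1P => kj _; rewrite in_setU1 (negbTE kj) /=.
  by case: (k \in S); rewrite ?mul0r ?addr0 ?coupling_factorN //; ring.
rewrite -(eq_bigr _ out_factor) -(eq_bigr _ in_factor) !big_split /=.
rewrite cardsU1 jS add1n [(-1) ^+ _.+1]exprS; ring.
Qed.

Lemma alt_poly_root_x (B : {set T}) j : j \in B -> (alt_poly B).[x j] = 0.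
Proof.
move=> jB; rewrite (horner_alt_poly_sq jB) // big1 ?mulr0 // => S _.
by rewrite subrr mulr0.
Qed.

Lemma alt_poly_root_oppx (B : {set T}) j : j \in B ->
  (B :\ j != set0 -> alt_sum (B :\ j) = 0) -> (alt_poly B).[- x j] = 0.
Proof.
move=> jB IH; rewrite (horner_alt_poly_sq jB) ?sqrrN //.
set Cp := \prod_(k in B :\ j) (x k ^+ 2 - x j ^+ 2 + a *+ 2 * x k * x j).
set Cm := \prod_(k in B :\ j) (x k ^+ 2 - x j ^+ 2 + a *+ 2 * x k * - x j).
rewrite (eq_bigr (fun S : {set T} => (-1) ^+ #|S| * weight (B :\ j) S * (Cp - Cm))).
  rewrite -big_distrl /= -/(alt_sum (B :\ j)).
  have [Bj0|/IH->] := eqVneq (B :\ j) set0; last by rewrite !mul0r mulr0.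
  by rewrite /Cp /Cm Bj0 !big_set0 subrr !mulr0.
by move=> S _; congr (_ * (_ - _)); apply: eq_bigr => k _; rewrite ?opprK if_same.
Qed.

Hypothesis x_neq_opp : forall i, x i != - x i.

Lemma alt_poly_eq0 (B : {set T}) :
  (forall j, j \in B -> B :\ j != set0 -> alt_sum (B :\ j) = 0) -> alt_poly B = 0.
Proof.
move=> IH; apply/eqP/negPn/negP => nz.
have x_inj : injective x.
  by move=> k l e; apply: contraTeq isT => /sqx_neq; rewrite e eqxx.
have x_neq_oppx k l : x k != - x l.
  have [<-|kl] := eqVneq k l; first exact: x_neq_opp.
  by apply: contra_neq (sqx_neq kl) => ->; rewrite sqrrN.
pose rs := [seq x k | k <- enum B] ++ [seq - x k | k <- enum B].
have roots : all (root (alt_poly B)) rs.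
  rewrite all_cat; apply/andP; split; apply/allP => z /mapP[k]; rewrite mem_enum => kB ->.
    exact/rootP/alt_poly_root_x.
  by apply/rootP/alt_poly_root_oppx/IH.
have uniq_rs : uniq rs.
  rewrite cat_uniq !map_inj_uniq ?enum_uniq ?andbT //=; last by move=> k l /oppr_inj /x_inj.
  apply/hasPn => z /mapP[k _ ->]; apply/mapP => -[l _ e].
  by move: (x_neq_oppx l k); rewrite e eqxx.
have := max_poly_roots nz roots uniq_rs.
by rewrite size_cat !size_map -cardE addnn -mul2n ltnNge size_alt_poly.
Qed.

Lemma alt_sum_eq0 (A : {set T}) : A != set0 -> alt_sum A = 0.
Proof.
elim: {A}_.+1 {-2}A (ltnSn #|A|) => // n IHn A ltAn.
case/set0Pn => m mA; set B := A :\ m.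
have ltBn : (#|B| < n)%N by move: ltAn; rewrite (cardsD1 m A) mA.
have /eqP : (alt_poly B).[x m] = 0.
  rewrite alt_poly_eq0 ?horner0 // => j jB; apply: IHn.
  by apply: leq_trans ltBn; rewrite (cardsD1 j B) jB.
rewrite horner_alt_poly_x // mulf_eq0 => /orP[/prodf_eq0[k /setD1P[km _]] | /eqP //].
by rewrite subr_eq0 (negbTE (sqx_neq km)).
Qed.

End AlternatingSum.

Definition set_indicator n (S : {set 'I_n}) : {ffun 'I_n -> 'I_2} :=
  [ffun k => if k \in S then ord_max else ord0].

Lemma set_indicator_bij n : bijective (@set_indicator n).
Proof.
exists (fun l : {ffun 'I_n -> 'I_2} => [set k | l k != ord0]).
  by move=> S; apply/setP => k; rewrite inE ffunE; case: (k \in S).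
move=> l; apply/ffunP => k; rewrite ffunE inE.
by case: (l k) => [[|[|m]] lt_m2] //=; apply: val_inj.
Qed.

Lemma sum_set_indicator n (S : {set 'I_n}) :
  (\sum_(k < n) (set_indicator S k : nat))%N = #|S|.
Proof.
by rewrite -sum1_card [RHS]big_mkcond; apply: eq_bigr => k _; rewrite ffunE; case: (k \in S).
Qed.

Lemma prod_set_indicator (F : fieldType) n (a : F) (x : 'I_n -> F)
    (c : 'I_n -> 'I_n -> F) (S : {set 'I_n}) :
  (forall i j : 'I_n, (i < j)%N -> c i j = coupling a x i j) ->
  \prod_(i < n) \prod_(j < n | (i < j)%N)
     (1 + ((set_indicator S i : nat)%:R - (set_indicator S j : nat)%:R) * c i j) =
  weight a x [set: 'I_n] S.
Proof.
move=> c_coupling; rewrite /weight (eq_bigl _ _ (@in_setT _)).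
under eq_bigr do rewrite (eq_bigl _ _ (@in_setT _)).
rewrite prod_ord_pairs => [|i]; last by case: (i \in S).
apply: eq_bigr => i _; apply: eq_bigr => j ij; rewrite c_coupling // coupling_antisym !ffunE.
by case: (i \in S); case: (j \in S) => /=; ring.
Qed.

Lemma sum_ffun_alt_sum (F : fieldType) n (a : F) (x : 'I_n -> F)
    (c : 'I_n -> 'I_n -> F) :
  (forall i j : 'I_n, (i < j)%N -> c i j = coupling a x i j) ->
  \sum_(l : {ffun 'I_n -> 'I_2})
     (-1) ^+ (\sum_(k < n) (l k : nat))%N *
     \prod_(i < n) \prod_(j < n | (i < j)%N)
        (1 + ((l i : nat)%:R - (l j : nat)%:R) * c i j) =
  alt_sum a x [set: 'I_n].
Proof.
move=> c_coupling; rewrite (reindex _ (onW_bij _ (@set_indicator_bij n))) /alt_sum.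
under [RHS]eq_bigl do rewrite subsetT.
by apply: eq_bigr => S _; rewrite sum_set_indicator (prod_set_indicator _ c_coupling).
Qed.

Lemma sinh_sub_mul_exp (u v : R) :
  sinh (u - v) * (exp u * exp v *+ 2) = exp u ^+ 2 - exp v ^+ 2.
Proof.
have exp_neq0 w : exp w != 0 by apply/eqP/Rgt_not_eq/exp_pos.
have exp_sub w w' : exp (w - w') = exp w / exp w' by rewrite exp_plus exp_Ropp.
have sinhE w : sinh w = (exp w - exp (- w)) / 2 by [].
by rewrite sinhE Ropp_minus_distr !exp_sub; field; rewrite !exp_neq0.
Qed.

Local Open Scope complex_scope.
Unset Implicit Arguments.

Theorem lemma1 (nu : R) (n : nat) (hn : (1 <= n)%N)
    (p_n : ('I_n -> R) -> R[i]) (theta : 'I_n -> R)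
    (hdist : forall i j : 'I_n, i != j -> theta i <> theta j) :
  \sum_(l : {ffun 'I_n -> 'I_2})
     (-1) ^+ (\sum_(k < n) (l k : nat))%N *
     (\prod_(i < n) \prod_(j < n | (i < j)%N)
        (1 + ((l i : nat)%:R - (l j : nat)%:R) *
             ('i * (sin (PI * nu))%:C / (sinh (theta_ij theta i j))%:C)))
     * p_n theta
  = 0.
Proof.
pose x k : R[i] := (exp (theta k))%:C.
have exp_gt0 k : 0 < exp (theta k) by apply/RltP/exp_pos.
have sqx_neq i j : i != j -> x i ^+ 2 != x j ^+ 2.
  move=> /hdist ij; rewrite /x -!rmorphXn (inj_eq (@complexI _)) eqrXn2 ?ltW //.
  by apply/eqP => /exp_inv.
have x_neq0 k : x k != 0 by rewrite fmorph_eq0 gt_eqF.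
have x_neq_opp k : x k != - x k.
  by rewrite /x -rmorphN (inj_eq (@complexI _)) (gt_eqF (gtrN (exp_gt0 k))).
have sinh_x i j : (sinh (theta_ij theta i j))%:C * (x i * x j *+ 2) = x i ^+ 2 - x j ^+ 2.
  rewrite /x -rmorphM -rmorphMn -rmorphM -!rmorphXn -rmorphB; congr _%:C.
  exact: sinh_sub_mul_exp.
rewrite -big_distrl /= (sum_ffun_alt_sum (a := 'i * (sin (PI * nu))%:C) (x := x)
  (c := fun i j => 'i * (sin (PI * nu))%:C / (sinh (theta_ij theta i j))%:C)) => [|i j ij].
  by rewrite alt_sum_eq0 ?mul0r //; apply/set0Pn; exists (Ordinal hn).
have : x i ^+ 2 - x j ^+ 2 != 0 by rewrite subr_eq0 sqx_neq // neq_ltn ij.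
rewrite -sinh_x mulf_eq0 negb_or => /andP[s0 _].
by rewrite /coupling -sinh_x; field; rewrite s0 !x_neq0.
Qed.
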